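(* Let $N\ge 2$ be an integer. There exist a nonempty open convex set $C\subset\mathbb{R}^{N-2}$ and a continuous injective map $\Phi\colon C\to\mathbb{R}^{(N-1)\times(N-1)}$ such that for every $w\in C$ the matrix $H=\Phi(w)$ is lower triangular and the following holds: for every $d\ge1$, every nonexpansive $\mathbb{T}\colon\mathbb{R}^d\to\mathbb{R}^d$, every $y_0\in\mathbb{R}^d$ and every $y_\star\in\mathrm{Fix}\,\mathbb{T}$, the iterates defined by \[ y_{k+1} = y_k - \sum_{j=0}^{k} h_{k+1,j+1}\,(y_j - \mathbb{T}y_j), \qquad k=0,1,\dots,N-2, \] where $h_{k,j}$ denotes the $(k,j)$ entry of $H$, satisfy \[ \|y_{N-1}-\mathbb{T}y_{N-1}\|^2 \le \frac{4\|y_0-y_\star\|^2}{N^2}. \]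
   Context: $\mathbb{T}$ is nonexpansive if it is $1$-Lipschitz; $\mathrm{Fix}\,\mathbb{T}=\{y: y=\mathbb{T}y\}$. Rows and columns of $(N-1)\times(N-1)$ matrices are indexed $1,\dots,N-1$. *)

From HB Require Import structures.
From mathcomp Require Import all_boot all_order all_algebra.
From mathcomp Require Import all_classical all_reals all_analysis.
Set Implicit Arguments. Unset Strict Implicit. Unset Printing Implicit Defensive.
Import Order.TTheory GRing.Theory Num.Theory numFieldNormedType.Exports.
Local Open Scope ring_scope.
Local Open Scope classical_set_scope.

Definition convex_rV (R : realType) (n : nat) (C : set 'rV[R]_n) : Prop :=
  forall x y (t : R), C x -> C y -> 0 <= t -> t <= 1 ->
    C (t *: x + (1 - t) *: y).

Definition sqnorm (R : realType) (d : nat) (v : 'rV[R]_d) : R :=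
  \sum_(i < d) (v ord0 i) ^+ 2.
Definition enorm (R : realType) (d : nat) (v : 'rV[R]_d) : R :=
  Num.sqrt (sqnorm v).

Definition nonexpansive (R : realType) (d : nat) (T : 'rV[R]_d -> 'rV[R]_d) :=
  forall x y, enorm (T x - T y) <= enorm (x - y).

Definition lower_triangular (R : realType) (n : nat) (H : 'M[R]_n) :=
  forall i j : 'I_n, (i < j)%N -> H i j = 0.

From HB Require Import structures.
From mathcomp Require Import all_boot all_order all_algebra.
From mathcomp Require Import all_classical all_reals all_analysis.
From mathcomp Require Import ring lra zify.
Set Implicit Arguments. Unset Strict Implicit. Unset Printing Implicit Defensive.
Import Order.TTheory GRing.Theory Num.Theory numFieldNormedType.Exports.
Local Open Scope ring_scope.
Local Open Scope classical_set_scope.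

(** Pick weights [0 = W_0 < W_1, ..., W_n] (with [n = N - 1]) that are concave and end
    with [W_n = n + 1], [W_(n+1) = n + 2].  The step matrix is chosen so that, with
    [g_k = y_k - T y_k], the iterates satisfy
    [W_k (y_k - y_0) = - sum_(i < k) (W_i g_i + (i + 1 - W_i) g_0)].
    Since [I - T] is 1/2-cocoercive, a quadratic Lyapunov potential [V_k] decreases at
    every step by a combination of cocoercivity gaps whose coefficients
    [2 W_k W_(k+1)] and [2 W_(k+1) (2 W_(k+1) - W_k - W_(k+2))] are nonnegative by
    positivity and concavity.  As [V_0 = 0], [V_n <= 0], and [V_n] together with one
    more cocoercivity inequality against [y_star] gives the bound.  The free weights
    [W_1, ..., W_(n-1)] range over a small box around quadratic reference weights,
    where positivity and concavity persist; column sums of the matrix recover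
    [W_j / W_n], whence injectivity. *)

Section Potential.
Variable R : realFieldType.

Definition gap (u x : R) : R := u * x - u ^+ 2 / 2.

(* The potential [V_k] of step [k], with [a = W_k], [b = W_(k+1)], [g = g_k],
   [U = W_k (y_k - y_0)] and [e = g_0]. *)
Definition lyap (k a b g U e : R) : R :=
  (2 * a ^+ 2 - a * b) * g ^+ 2 + 2 * (b - a) * g * U
  + 2 * a * (k + b - 2 * a) * g * e
  + (k * (k + 1) + 2 * a ^+ 2 - a * b - 2 * k * a) * e ^+ 2
  + 2 * (1 - b + a) * e * U.

Lemma lyap_step (k a b c g g' e y0 y y' : R) :
  b * (y' - y0) = a * (y - y0) - a * (g - e) - (k + 1) * e ->
  2 * a * b * gap (g' - g) (y' - y)
    + 2 * b * (2 * b - a - c) * gap (g' - e) (y' - y0)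
  = lyap k a b g (a * (y - y0)) e - lyap (k + 1) b c g' (b * (y' - y0)) e.
Proof.
move=> step_y.
have -> : 2 * a * b * gap (g' - g) (y' - y)
          + 2 * b * (2 * b - a - c) * gap (g' - e) (y' - y0)
        = 2 * a * (g' - g) * (b * (y' - y0)) - 2 * b * (g' - g) * (a * (y - y0))
          - a * b * (g' - g) ^+ 2
          + 2 * (2 * b - a - c) * ((g' - e) * (b * (y' - y0)) - b * (g' - e) ^+ 2 / 2).
  by rewrite /gap; field.
by rewrite step_y /lyap; field.
Qed.

Lemma residual_sq_le (k g y y0 s e : R) : 0 <= k ->
  g ^+ 2 + 2 / (k + 1) ^+ 2 * - lyap k (k + 1) (k + 1 + 1) g ((k + 1) * (y - y0)) e
    + 4 / (k + 1) * gap g (y - s)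
  <= 4 * (y0 - s) ^+ 2 / (k + 1) ^+ 2.
Proof.
move=> k_ge0; have k1_neq0 : k + 1 != 0 by rewrite lt0r_neq0 // ltr_wpDl.
rewrite -subr_ge0.
have -> : 4 * (y0 - s) ^+ 2 / (k + 1) ^+ 2
          - (g ^+ 2 + 2 / (k + 1) ^+ 2 * - lyap k (k + 1) (k + 1 + 1) g ((k + 1) * (y - y0)) e
             + 4 / (k + 1) * gap g (y - s))
        = 4 / (k + 1) ^+ 2 * ((k + 1) / 2 * g - (y0 - s)) ^+ 2.
  by rewrite /lyap /gap; field.
by rewrite mulr_ge0 ?sqr_ge0 // divr_ge0 // sqr_ge0.
Qed.

End Potential.

Lemma nonexpansive_gap_ge0 (R : realType) (d : nat) (T : 'rV[R]_d -> 'rV[R]_d)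
    (x z : 'rV[R]_d) :
  nonexpansive T ->
  0 <= \sum_(i < d) gap (x ord0 i - T x ord0 i - (z ord0 i - T z ord0 i))
                        (x ord0 i - z ord0 i).
Proof.
have sqnorm_ge0 (v : 'rV[R]_d) : 0 <= sqnorm v by apply: sumr_ge0 => i _; exact: sqr_ge0.
move=> /(_ x z); rewrite /enorm ler_sqrt // => le_sqnorm.
rewrite (_ : \sum_i _ = (sqnorm (x - z) - sqnorm (T x - T z)) / 2).
  by rewrite divr_ge0 // subr_ge0.
rewrite /sqnorm -sumrB mulr_suml; apply: eq_bigr => i _.
by rewrite !mxE /gap; field.
Qed.

Lemma sum_ord_mulrb (V : nmodType) (n k : nat) (F : nat -> V) : (k < n)%N ->
  \sum_(j < n) F j *+ (j == k :> nat) = F k.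
Proof.
move=> lt_kn; under eq_bigr do rewrite mulrb.
by rewrite -big_mkcond big_ord1_eq lt_kn.
Qed.

Section StepCoefficients.
Variables (R : fieldType) (W : nat -> R).

Definition dcoef (k j : nat) : R :=
  \sum_(i < k) (W i *+ (j == i :> nat) + (i.+1%:R - W i) *+ (j == 0)%N).

Definition ccoef (k j : nat) : R := dcoef k j / W k.

Definition hstep (k j : nat) : R := ccoef k.+1 j - ccoef k j.

Definition hmx (n : nat) : 'M[R]_n := \matrix_(k, j) hstep k j.

Lemma ccoef0 j : ccoef 0 j = 0.
Proof. by rewrite /ccoef /dcoef big_ord0 mul0r. Qed.

Lemma dcoef_eq0 k j : (0 < j)%N -> (k <= j)%N -> dcoef k j = 0.
Proof.
move=> j_gt0 le_kj; apply: big1 => i _.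
have lt_ij : (i < j)%N by apply: leq_trans le_kj.
by rewrite (gtn_eqF lt_ij) (gtn_eqF j_gt0) !mulr0n addr0.
Qed.

Lemma hstep_eq0 k j : (k < j)%N -> hstep k j = 0.
Proof.
move=> lt_kj; have j_gt0 : (0 < j)%N by apply: leq_ltn_trans lt_kj.
by rewrite /hstep /ccoef (dcoef_eq0 j_gt0 lt_kj) (dcoef_eq0 j_gt0 (ltnW lt_kj)) !mul0r subrr.
Qed.

Lemma sum_dcoef n k (G : nat -> R) : (k <= n)%N ->
  \sum_(j < n) dcoef k j * G j
  = \sum_(i < k) (W i * G i + (i.+1%:R - W i) * G 0).
Proof.
move=> le_kn; under eq_bigr do rewrite /dcoef mulr_suml.
rewrite exchange_big /=; apply: eq_bigr => i _.
have lt_in : (i < n)%N by apply: leq_trans le_kn.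
under eq_bigr do rewrite mulrDl !mulrnAl.
rewrite big_split /= (sum_ord_mulrb (fun j => W i * G j)) //.
by rewrite (sum_ord_mulrb (fun j => (i.+1%:R - W i) * G j)) // (leq_ltn_trans _ lt_in).
Qed.

Lemma hmx_col_sum n (j : 'I_n) : (0 < j)%N -> \sum_(k < n) hmx n k j = W j / W n.
Proof.
move=> j_gt0; under eq_bigr do rewrite mxE.
rewrite -(big_mkord xpredT (fun k => hstep k j)) telescope_sumr // ccoef0 subr0.
rewrite /ccoef /dcoef big_split /=.
under eq_bigr do rewrite eq_sym.
rewrite sum_ord_mulrb //.
by rewrite big1 ?addr0 // => i _; rewrite eqn0Ngt j_gt0 mulr0n.
Qed.

End StepCoefficients.

Section ScalarTrajectory.
Variables (R : fieldType) (W : nat -> R) (n : nat) (Y G : nat -> R).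
Hypothesis Y_rec : forall k, (k < n)%N -> Y k.+1 = Y k - \sum_(j < n) hstep W k j * G j.
Hypothesis W_neq0 : forall k, (0 < k <= n)%N -> W k != 0.

Lemma traj_ccoef k : (k <= n)%N -> Y k - Y 0 = - \sum_(j < n) ccoef W k j * G j.
Proof.
elim: k => [_|k IH lt_kn]; first by rewrite subrr big1 ?oppr0 // => j _; rewrite ccoef0 mul0r.
rewrite (Y_rec lt_kn) addrAC (IH (ltnW lt_kn)) -opprD -big_split /=.
by congr (- _); apply: eq_bigr => j _; rewrite /hstep mulrBl subrKC.
Qed.

Lemma weighted_traj k : (k <= n)%N ->
  W k * (Y k - Y 0) = - \sum_(i < k) (W i * G i + (i.+1%:R - W i) * G 0).
Proof.
case: k => [_|k le_kn]; first by rewrite subrr mulr0 big_ord0 oppr0.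
rewrite traj_ccoef // mulrN mulr_sumr -(sum_dcoef _ _ le_kn); congr (- _).
by apply: eq_bigr => j _; rewrite mulrA [W _ * _]mulrC divfK ?W_neq0.
Qed.

Lemma weighted_traj_step k : (k < n)%N ->
  W k.+1 * (Y k.+1 - Y 0) = W k * (Y k - Y 0) - W k * (G k - G 0) - k.+1%:R * G 0.
Proof.
move=> lt_kn; rewrite (weighted_traj lt_kn) (weighted_traj (ltnW lt_kn)).
by rewrite big_ord_recr /=; ring.
Qed.

End ScalarTrajectory.

Section Convergence.
Variables (R : realType) (W : nat -> R) (n : nat).
Hypothesis W0 : W 0 = 0.
Hypothesis W_gt0 : forall j, (0 < j <= n)%N -> 0 < W j.
Hypothesis W_concave : forall k, (k < n)%N -> W k + W k.+2 <= 2 * W k.+1.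
Hypothesis W_last : W n = n.+1%:R.
Hypothesis W_after : W n.+1 = n.+2%:R.

Lemma W_ge0 j : (j <= n)%N -> 0 <= W j.
Proof. by case: j => [|j] le_jn; [rewrite W0 | rewrite ltW // W_gt0]. Qed.

Lemma lyap_telescope (Y G : nat -> R) :
  (forall k, (k < n)%N -> Y k.+1 = Y k - \sum_(j < n) hstep W k j * G j) ->
  lyap n%:R (W n) (W n.+1) (G n) (W n * (Y n - Y 0)) (G 0)
  = - \sum_(k < n) (2 * W k * W k.+1 * gap (G k.+1 - G k) (Y k.+1 - Y k)
       + 2 * W k.+1 * (2 * W k.+1 - W k - W k.+2) * gap (G k.+1 - G 0) (Y k.+1 - Y 0)).
Proof.
move=> Y_rec.
have W_neq0 k : (0 < k <= n)%N -> W k != 0 by move=> /W_gt0/lt0r_neq0.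
pose V k := lyap k%:R (W k) (W k.+1) (G k) (W k * (Y k - Y 0)) (G 0).
have V0 : V 0 = 0 by rewrite /V W0 subrr mulr0 /lyap; ring.
rewrite -/(V n) -[V n]subr0 -{1}V0 -(telescope_sumr V (leq0n n)) big_mkord.
rewrite -sumrN; apply: eq_bigr => k _; rewrite -opprB; congr (- _).
rewrite /V -natr1.
apply/esym/lyap_step; rewrite natr1.
exact: (weighted_traj_step Y_rec W_neq0).
Qed.

Theorem hmx_residual_bound d (T : 'rV[R]_d -> 'rV[R]_d) (y : nat -> 'rV[R]_d)
    (ystar : 'rV[R]_d) :
  nonexpansive T -> T ystar = ystar ->
  (forall k : 'I_n,
     y k.+1 = y k - \sum_(j < n | (j <= k)%N) hmx W n k j *: (y j - T (y j))) ->
  sqnorm (y n - T (y n)) <= 4 * sqnorm (y 0%N - ystar) / n.+1%:R ^+ 2.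
Proof.
move=> T_ne T_fix y_rec.
pose Y i k := y k ord0 i; pose G i k := y k ord0 i - T (y k) ord0 i.
have Y_rec i k : (k < n)%N -> Y i k.+1 = Y i k - \sum_(j < n) hstep W k j * G i j.
  move=> lt_kn; rewrite /Y (y_rec (Ordinal lt_kn)) !mxE summxE big_mkcond /=.
  congr (_ - _); apply: eq_bigr => j _; rewrite !mxE.
  by case: leqP => // lt_kj; rewrite hstep_eq0 ?mul0r.
pose V i := lyap n%:R (W n) (W n.+1) (G i n) (W n * (Y i n - Y i 0)) (G i 0).
have sumNV_ge0 : 0 <= \sum_i - V i.
  under eq_bigr do rewrite /V (lyap_telescope (Y_rec _)) opprK.
  rewrite exchange_big /=; apply: sumr_ge0 => k _.
  have lt_kn := ltn_ord k.
  have Wk := W_ge0 (ltnW lt_kn); have Wk1 := W_ge0 lt_kn.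
  have concave_k : 0 <= 2 * W k.+1 - W k - W k.+2 by have := W_concave lt_kn; lra.
  rewrite big_split /= -!mulr_sumr.
  by rewrite addr_ge0 // mulr_ge0 ?nonexpansive_gap_ge0 // !mulr_ge0.
have gap_ge0 : 0 <= \sum_i gap (G i n) (Y i n - ystar ord0 i).
  have := nonexpansive_gap_ge0 (y n) ystar T_ne.
  by under eq_bigr do rewrite T_fix subrr subr0.
rewrite /sqnorm (eq_bigr (fun i => G i n ^+ 2)) => [|i _]; last by rewrite !mxE.
rewrite mulr_sumr mulr_suml.
apply: le_trans (_ : _ <= \sum_i (G i n ^+ 2 + (2 / n.+1%:R ^+ 2 * - V i
                              + 4 / n.+1%:R * gap (G i n) (Y i n - ystar ord0 i)))) _.
  by rewrite big_split /= lerDl big_split /= -!mulr_sumr addr_ge0 // mulr_ge0.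
apply: ler_sum => i _; rewrite !mxE addrA.
have := residual_sq_le (G i n) (Y i n) (Y i 0) (ystar ord0 i) (G i 0) (ler0n R n).
by rewrite !natr1 /V W_last W_after.
Qed.

End Convergence.

Lemma ball_convex_rV (R : realType) (m : nat) (c : 'rV[R]_m) (r : R) :
  convex_rV (ball c r).
Proof.
move=> x z t; rewrite -ball_normE /= => cx cz t_ge0 t_le1.
have -> : c - (t *: x + (1 - t) *: z) = t *: (c - x) + (1 - t) *: (c - z).
  by rewrite !scalerBr addrACA -scalerDl subrKC scale1r opprD.
apply: le_lt_trans (ler_normD _ _) _.
rewrite !normrZ !ger0_norm ?subr_ge0 //.
have [->|t_neq0] := eqVneq t 0; first by rewrite mul0r add0r subr0 mul1r.
have : t * `|c - x| < t * r by rewrite ltr_pM2l // lt_def t_neq0.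
have : (1 - t) * `|c - z| <= (1 - t) * r by rewrite ler_wpM2l ?subr_ge0 // ltW.
lra.
Qed.

Lemma continuous_mx_entries (R : numFieldType) (T : topologicalType) m p
    (F : T -> 'M[R]_(m, p)) (x : T) :
  (forall i j, {for x, continuous (fun z => F z i j)}) -> {for x, continuous F}.
Proof.
move=> F_cont A /nbhs_ballP[e e_gt0 eA].
have : \forall z \near x, forall ij : 'I_m * 'I_p, ball (F x ij.1 ij.2) e (F z ij.1 ij.2).
  by apply: filter_forall => -[i j]; exact: (F_cont i j _ (nbhsx_ballx _ _ e_gt0)).
by apply: filterS => z Fz; apply: eA; split => // i j; exact: (Fz (i, j)).
Qed.

Section WeightParametrization.
Variables (R : realType) (m : nat).
Implicit Type w : 'rV[R]_m.

Definition wweight w (j : nat) : R :=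
  if j is i.+1 then
    if (insub i : option 'I_m) is Some i' then w ord0 i' else j.+1%:R
  else 0.

Lemma wweight_coord w (i : 'I_m) : wweight w i.+1 = w ord0 i.
Proof. by rewrite /wweight valK. Qed.

Lemma wweight_tail w j : (m < j)%N -> wweight w j = j.+1%:R.
Proof. by case: j => // i lt_mi; rewrite /wweight insubN // -leqNgt. Qed.

Lemma wweight_continuous j : continuous (fun w => wweight w j).
Proof.
case: j => [|i]; first exact: cst_continuous.
rewrite /wweight; case: insubP => [i' _ _|_].
  exact: coord_continuous.
exact: cst_continuous.
Qed.

Lemma dcoef_wweight_continuous k j : continuous (fun w => dcoef (wweight w) k j).
Proof.
(* [exact:] fails to match these continuity lemmas against the goals; the
   [have := _; exact] detours compare them up to conversion instead. *)
rewrite /dcoef; apply: (continuous_big add_continuous) => i _ w.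
have W_cont := @wweight_continuous i w.
have diag_cont : {for w, continuous (fun x => wweight x i *+ (j == i :> nat))}.
  by have := continuous_comp W_cont (@natmul_continuous _ R^o (j == i :> nat) _); exact.
have zero_cont : {for w, continuous (fun x => (i.+1%:R - wweight x i) *+ (j == 0)%N)}.
  have := continuousB (@cst_continuous _ _ (i.+1%:R : R) w) W_cont => diff_cont.
  by have := continuous_comp diff_cont (@natmul_continuous _ R^o (j == 0)%N _); exact.
by have := continuousD diag_cont zero_cont; exact.
Qed.

Lemma ccoef_wweight_continuous w k j : wweight w k != 0 ->
  {for w, continuous (fun x => ccoef (wweight x) k j)}.
Proof.
move=> W_neq0.
have := continuousV (s := fun x => wweight x k) W_neq0 (@wweight_continuous k w).
move=> inv_cont.
by have := continuousM (@dcoef_wweight_continuous k j w) inv_cont; exact.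
Qed.

Lemma hmx_wweight_continuous w :
  (forall k, (0 < k <= m.+1)%N -> wweight w k != 0) ->
  {for w, continuous (fun x => hmx (wweight x) m.+1)}.
Proof.
move=> W_neq0; apply: continuous_mx_entries => k j.
have lt_km := ltn_ord k.
have next_cont := @ccoef_wweight_continuous w k.+1 j (W_neq0 k.+1 lt_km).
have -> : (fun x => hmx (wweight x) m.+1 k j)
          = (fun x => ccoef (wweight x) k.+1 j - ccoef (wweight x) k j).
  by apply/funext => x; rewrite mxE.
case: (posnP k) => [k0|k_gt0].
  have -> : (fun x => ccoef (wweight x) k.+1 j - ccoef (wweight x) k j)
            = (fun x => ccoef (wweight x) k.+1 j).
    by apply/funext => x; rewrite k0 ccoef0 subr0.
  exact: next_cont.
have k_range : (0 < k <= m.+1)%N by rewrite k_gt0 ltnW.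
have cur_cont := @ccoef_wweight_continuous w k j (W_neq0 k k_range).
by have := continuousB next_cont cur_cont; exact.
Qed.

Lemma hmx_wweight_inj : injective (fun w => hmx (wweight w) m.+1).
Proof.
have col_sum w (i : 'I_m) :
    \sum_(k < m.+1) hmx (wweight w) m.+1 k (lift ord0 i) = w ord0 i / m.+2%:R.
  by rewrite hmx_col_sum // lift0 wweight_coord wweight_tail.
move=> w1 w2 /= eq_hmx; apply/rowP => i.
have := col_sum w1 i; rewrite eq_hmx col_sum => /(congr1 ( *%R^~ m.+2%:R)).
by rewrite !divfK ?pnatr_eq0.
Qed.

End WeightParametrization.

Section ReferenceWeights.
Variables (R : realType) (m : nat).

Definition ref_weight (j : nat) : R :=
  j%:R + j%:R * (2 * m.+1%:R + 1 - j%:R) / (m.+1%:R * m.+2%:R).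

Definition ref_center : 'rV[R]_m := \row_(i < m) ref_weight i.+1.

Definition ref_radius : R := (4 * (m.+1%:R * m.+2%:R))^-1.

Lemma ref_radius_gt0 : 0 < ref_radius.
Proof. by rewrite invr_gt0 !mulr_gt0 ?ltr0n. Qed.

Lemma ref_radius_le1 : ref_radius <= 1.
Proof.
rewrite invf_le1 ?mulr_gt0 ?ltr0n //.
have : 1 <= m.+1%:R * m.+2%:R :> R by rewrite mulr_ege1 // ler1n.
lra.
Qed.

Lemma ref_weight_tail j : (m < j <= m.+2)%N -> ref_weight j = j.+1%:R.
Proof.
move=> /andP[lt_mj le_jm]; have [->|->] : j = m.+1 \/ j = m.+2 by lia.
all: by rewrite /ref_weight -!natr1; field; rewrite !natr1 !pnatr_eq0.
Qed.

Lemma ref_weight_ge1 j : (0 < j <= m.+2)%N -> 1 <= ref_weight j.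
Proof.
move=> /andP[j_gt0 le_jm].
have j_ge1 : 1 <= j%:R :> R by rewrite ler1n.
have le_j : j%:R <= 2 * m.+1%:R + 1 :> R.
  have := ler0n R m.+1; have : j%:R <= m.+2%:R :> R by rewrite ler_nat.
  rewrite -natr1; lra.
apply: le_trans j_ge1 _; rewrite lerDl.
by rewrite divr_ge0 ?mulr_ge0 ?ler0n // subr_ge0.
Qed.

Lemma ref_weight_concave k :
  ref_weight k + ref_weight k.+2 - 2 * ref_weight k.+1 = - (8 * ref_radius).
Proof. by rewrite /ref_weight /ref_radius -!natr1; field; rewrite !natr1 !pnatr_eq0. Qed.

Lemma wweight_ref_center j : (j <= m.+2)%N -> wweight ref_center j = ref_weight j.
Proof.
case: j => [_|i le_im]; first by rewrite /ref_weight !mul0r add0r.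
have [lt_im|le_mi] := ltnP i m.
  by rewrite (wweight_coord _ (Ordinal lt_im)) mxE.
by rewrite wweight_tail // ref_weight_tail // ltnS le_mi.
Qed.

Lemma wweight_ball_dist w j : ball ref_center ref_radius w ->
  `|wweight ref_center j - wweight w j| < ref_radius.
Proof.
move=> [_ w_near]; case: j => [|i]; first by rewrite subrr normr0 ref_radius_gt0.
have [lt_im|le_mi] := ltnP i m.
  by rewrite !(wweight_coord _ (Ordinal lt_im)); exact: w_near.
by rewrite !wweight_tail // subrr normr0 ref_radius_gt0.
Qed.

Lemma ball_wweight_gt0 w : ball ref_center ref_radius w ->
  forall j, (0 < j <= m.+2)%N -> 0 < wweight w j.
Proof.
move=> w_ball j j_range; have := wweight_ball_dist j w_ball.
rewrite wweight_ref_center ?(andP j_range).2 // ltr_norml => /andP[_ near_j].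
have := ref_weight_ge1 j_range; have := ref_radius_le1; lra.
Qed.

Lemma ball_wweight_concave w : ball ref_center ref_radius w ->
  forall k, (k <= m)%N -> wweight w k + wweight w k.+2 <= 2 * wweight w k.+1.
Proof.
move=> w_ball k le_km.
have dist j : (j <= m.+2)%N -> `|ref_weight j - wweight w j| < ref_radius.
  by move=> le_jm; rewrite -wweight_ref_center //; exact: wweight_ball_dist.
have := dist k (leqW (leqW le_km)); have := dist k.+1 (leqW le_km).
have := dist k.+2 le_km; rewrite !ltr_norml.
have := ref_weight_concave k; have := ref_radius_gt0; lra.
Qed.

End ReferenceWeights.

Theorem theorem4p1 (R : realType) (N : nat) (hN : (2 <= N)%N) :
  exists (C : set 'rV[R]_(N - 2)) (Phi : 'rV[R]_(N - 2) -> 'M[R]_(N - 1)),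
    [/\ C !=set0, open C, convex_rV C,
        {within C, continuous Phi} /\ {in C &, injective Phi} &
        forall w, C w ->
          lower_triangular (Phi w) /\
          forall (d : nat) (T : 'rV[R]_d -> 'rV[R]_d) (y : nat -> 'rV[R]_d)
                 (ystar : 'rV[R]_d),
            (0 < d)%N -> nonexpansive T -> T ystar = ystar ->
            (forall k : 'I_(N - 1),
               y k.+1 = y k - \sum_(j < N - 1 | (j <= k)%N)
                                 Phi w k j *: (y j - T (y j))) ->
            sqnorm (y (N - 1)%N - T (y (N - 1)%N))
              <= 4 * sqnorm (y 0%N - ystar) / (N%:R ^+ 2)].
Proof.
case: N hN => [|[|m]] // _; rewrite !subSS !subn0.
exists (ball (ref_center R m) (ref_radius R m)), (fun w => hmx (wweight w) m.+1).
have W_gt0 w : ball (ref_center R m) (ref_radius R m) w ->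
    forall j, (0 < j <= m.+1)%N -> 0 < wweight w j.
  by move=> w_ball j /andP[j_gt0 le_jm]; rewrite ball_wweight_gt0 // j_gt0 leqW.
split.
- by exists (ref_center R m); exact/ballxx/ref_radius_gt0.
- exact: ball_open.
- exact: ball_convex_rV.
- split; last by move=> w1 w2 _ _; exact: hmx_wweight_inj.
  apply: continuous_in_subspaceT => w /[!inE] w_ball.
  apply: hmx_wweight_continuous => k k_range.
  by rewrite lt0r_neq0 // W_gt0.
- move=> w w_ball; split; first by move=> k j lt_kj; rewrite mxE hstep_eq0.
  move=> d T y ystar _; apply: hmx_residual_bound => //.
  + exact: W_gt0.
  + by move=> k lt_km; exact: ball_wweight_concave.
  + by rewrite wweight_tail.
  + by rewrite wweight_tail.
Qed.
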